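(* Let $(B^{*,*},\delta_h,\delta_v)$ be a bicomplex of vector spaces ($\delta_h:B^{p,q}\to B^{p+1,q}$, $\delta_v:B^{p,q}\to B^{p,q+1}$, $\delta_h^2=\delta_v^2=\delta_h\delta_v+\delta_v\delta_h=0$) such that (i) $B^{p,q}=0$ unless $0\le -p\le q$, (ii) $B^{p,*}=0$ for $p$ sufficiently negative, and (iii) $H^p(B^{*,q},\delta_h)=0$ whenever $p+q\ne0$. Let $Z_h^n$, $D^n$, $\pi_n$, $X^n$, $U$ and $\beta$ be as in the context. Then for each $n\geq 0$ and $z\in Z_h^n$, the element $\beta(z)\in\bigoplus_{p\geq n}B^{-p,p}$ is a degree $0$ cocycle of the total complex $(B^*,\delta_h+\delta_v)$, $B^k=\bigoplus_{p+q=k}B^{p,q}$. Consequently, for every $z\in Z_h^n$, $\beta(z)$ is a cocycle of the total complex with $\beta(z)-z\in\bigoplus_{p>n}B^{-p,p}$.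
   Context: $Z_h^n:=\ker(\delta_h:B^{-n,n}\to B^{-n+1,n})$. For each $n\ge0$ choose a complementary subspace $D^n$ with $B^{-n,n}=Z_h^n\oplus D^n$, and let $\pi_n:B^{-n,n}\to D^n$ be the projection along $Z_h^n$. Let $X^n:=\ker(\delta_v\delta_h:B^{-n,n}\to B^{-n+1,n+1})$. For $x\in X^n$ define $U(x):=\pi_{n+1}(u)$ where $u\in B^{-n-1,n+1}$ is any element with $\delta_h u=\delta_v x$ (such $u$ exists and $U(x)$ does not depend on its choice, and $U(x)\in X^{n+1}$). For $z\in Z_h^n$ define $\beta(z):=z-U(z)+U^2(z)-U^3(z)+\cdots$ (a finite sum). *)

From HB Require Import structures.
From mathcomp Require Import all_boot all_order all_algebra.
From mathcomp Require Import zify.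
From Stdlib Require Import ClassicalEpsilon.
Set Implicit Arguments. Unset Strict Implicit. Unset Printing Implicit Defensive.
Import Order.TTheory GRing.Theory Num.Theory.
Local Open Scope ring_scope.

Section Bicomplex.
Variable K : fieldType.
Variable B : int -> int -> lmodType K.

Definition castB (p p' q q' : int) (ep : p = p') (eq : q = q') (x : B p q) : B p' q' :=
  eq_rect p (fun p0 => B p0 q') (eq_rect q (fun q0 => B p q0) x q' eq) p' ep.

Definition Bd (n : nat) := B (- (n%:Z)) (n%:Z).

Definition castBd (m m' : nat) (e : m = m') (x : Bd m) : Bd m' :=
  eq_rect m Bd x m' e.

Variable dh : forall p q : int, {linear B p q -> B (p + 1) q}.
Variable dv : forall p q : int, {linear B p q -> B p (q + 1)}.

(* projection pi_n : B^{-n,n} -> D^n along Z_h^n (D^n = image of pi_n) *)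
Variable pi : forall n : nat, {linear Bd n -> Bd n}.

Lemma U_e1 (n : nat) : - (n.+1%:Z) + 1 = - (n%:Z).
Proof. lia. Qed.
Lemma U_e2 (n : nat) : (n.+1)%:Z = n%:Z + 1.
Proof. lia. Qed.

Definition U (n : nat) (x : Bd n) : Bd n.+1 :=
  pi n.+1 (epsilon (inhabits (0 : Bd n.+1))
    (fun u : Bd n.+1 => castB (U_e1 n) (U_e2 n) (dh _ _ u) = dv _ _ x)).

Fixpoint Uiter (n k : nat) : Bd n -> Bd (k + n)%N :=
  match k return Bd n -> Bd (k + n)%N with
  | 0 => fun z => z
  | k'.+1 => fun z => @U (k' + n)%N (@Uiter n k' z)
  end.

Definition beta (n : nat) (z : Bd n) : forall m : nat, Bd m :=
  fun m =>
    (if (n <= m)%N as b return (n <= m)%N = b -> Bd m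
     then fun h => castBd (subnK h) ((-1) ^+ (m - n)%N *: @Uiter n (m - n)%N z)
     else fun _ => 0) erefl.

Definition tot (k : int) := forall p : int, B p (k - p).

Lemma dtot_e1 (k p : int) : k - p + 1 = k + 1 - p. Proof. lia. Qed.
Lemma dtot_e2 (p : int) : p - 1 + 1 = p. Proof. lia. Qed.
Lemma dtot_e3 (k p : int) : k - (p - 1) = k + 1 - p. Proof. lia. Qed.

Definition dtot (k : int) (c : tot k) : tot (k + 1) :=
  fun p => castB erefl (dtot_e1 k p) (dv p (k - p) (c p))
         + castB (dtot_e2 p) (dtot_e3 k p) (dh (p - 1) (k - (p - 1)) (c (p - 1))).

Definition is_cocycle (k : int) (c : tot k) : Prop := forall p, dtot c p = 0.

Lemma diag_e1 (p : int) : p <= 0 -> - ((absz p)%:Z) = p.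
Proof. lia. Qed.
Lemma diag_e2 (p : int) : p <= 0 -> (absz p)%:Z = 0 - p.
Proof. lia. Qed.

Definition diag_tot (d : forall m : nat, Bd m) : tot 0 :=
  fun p =>
    (if p <= 0 as b return (p <= 0) = b -> B p (0 - p)
     then fun h => castB (diag_e1 h) (diag_e2 h) (d (absz p))
     else fun _ => 0) erefl.

End Bicomplex.

(* Each U^k z lies in X^{n+k}, so [delta_h U^{k+1} z = delta_v U^k z]: projecting
   along Z_h does not change delta_h.  In the alternating sum
   beta(z) = sum_k (-1)^k U^k z the delta_v-image of each term therefore cancels
   the delta_h-image of the next one, and beta(z) is a total cocycle.  It is a
   finite sum because the columns vanish for p sufficiently negative. *)

From HB Require Import structures.
From mathcomp Require Import all_boot all_order all_algebra.
From mathcomp Require Import zify.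
From Stdlib Require Import ClassicalEpsilon.
Set Implicit Arguments. Unset Strict Implicit. Unset Printing Implicit Defensive.
Import Order.TTheory GRing.Theory Num.Theory.
Local Open Scope ring_scope.

Lemma dep_if_true (c : bool) (T : Type) (f : c = true -> T) (g : c = false -> T)
    (h : c = true) :
  (if c as b return c = b -> T then f else g) erefl = f h.
Proof. by move: f g h; case: c => f g h //; rewrite (eq_irrelevance h erefl). Qed.

Lemma dep_if_false (c : bool) (T : Type) (f : c = true -> T) (g : c = false -> T)
    (h : c = false) :
  (if c as b return c = b -> T then f else g) erefl = g h.
Proof. by move: f g h; case: c => f g h //; rewrite (eq_irrelevance h erefl). Qed.

Section Casts.
Variable K : fieldType.
Variable B : int -> int -> lmodType K.

Lemma castB_irr p p' q q' (e1 e1' : p = p') (e2 e2' : q = q') (x : B p q) :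
  castB e1 e2 x = castB e1' e2' x.
Proof. by rewrite (eq_irrelevance e1 e1') (eq_irrelevance e2 e2'). Qed.

Lemma castB_id p q (e1 : p = p) (e2 : q = q) (x : B p q) : castB e1 e2 x = x.
Proof. by rewrite (castB_irr e1 erefl e2 erefl). Qed.

Lemma castB_comp p p' p'' q q' q'' (e1 : p = p') (e2 : q = q') (e3 : p' = p'')
    (e4 : q' = q'') (x : B p q) :
  castB e3 e4 (castB e1 e2 x) = castB (etrans e1 e3) (etrans e2 e4) x.
Proof. by case: p'' / e3; case: q'' / e4; case: p' / e1; case: q' / e2. Qed.

Lemma castB0 p p' q q' (e1 : p = p') (e2 : q = q') : castB e1 e2 (0 : B p q) = 0.
Proof. by case: p' / e1; case: q' / e2. Qed.

Lemma castBD p p' q q' (e1 : p = p') (e2 : q = q') (x y : B p q) :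
  castB e1 e2 (x + y) = castB e1 e2 x + castB e1 e2 y.
Proof. by case: p' / e1; case: q' / e2. Qed.

Lemma castBZ p p' q q' (e1 : p = p') (e2 : q = q') a (x : B p q) :
  castB e1 e2 (a *: x) = a *: castB e1 e2 x.
Proof. by case: p' / e1; case: q' / e2. Qed.

Lemma castBD_cast P Q p1 q1 p2 q2 (e1 : p2 = p1) (e2 : q2 = q1)
    (f1 : p1 = P) (f2 : q1 = Q) (g1 : p2 = P) (g2 : q2 = Q) (y : B p1 q1) (w : B p2 q2) :
  castB f1 f2 y + castB g1 g2 w = castB f1 f2 (y + castB e1 e2 w).
Proof. by rewrite castBD castB_comp; congr (_ + _); apply: castB_irr. Qed.

Lemma castBd_id m (e : m = m) (x : Bd B m) : castBd e x = x.
Proof. by rewrite (eq_irrelevance e erefl). Qed.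

Lemma diag_tot_at (d : forall m, Bd B m) p (m : nat) (e1 : - (m%:Z) = p)
    (e2 : m%:Z = 0 - p) :
  diag_tot d p = castB e1 e2 (d m).
Proof.
have hp : (p <= 0) = true by apply/idP; lia.
rewrite /diag_tot (dep_if_true _ _ hp).
move: (diag_e1 hp) (diag_e2 hp).
have -> : absz p = m by lia.
by move=> ? ?; apply: castB_irr.
Qed.

Variable dh : forall p q : int, {linear B p q -> B (p + 1) q}.
Variable dv : forall p q : int, {linear B p q -> B p (q + 1)}.

Lemma dh_cast p p' q q' (e1 : p = p') (e2 : q = q') (x : B p q) :
  dh p' q' (castB e1 e2 x) = castB (f_equal (fun k => k + 1) e1) e2 (dh p q x).
Proof. by case: p' / e1; case: q' / e2. Qed.

Lemma dv_cast p p' q q' (e1 : p = p') (e2 : q = q') (x : B p q) :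
  dv p' q' (castB e1 e2 x) = castB e1 (f_equal (fun k => k + 1) e2) (dv p q x).
Proof. by case: p' / e1; case: q' / e2. Qed.

(* For p > 0 the degree-1 component lies in B^{p,1-p}, hence only the
   zig-zag relations between consecutive diagonal terms are needed. *)
Lemma diag_tot_cocycle (d : forall m, Bd B m) :
  (forall p q (x : B p q), 0 < p -> x = 0) ->
  (forall m, dv _ _ (d m) + castB (U_e1 m) (U_e2 m) (dh _ _ (d m.+1)) = 0) ->
  is_cocycle dh dv (diag_tot d).
Proof.
move=> vanish_pos hd p; case: (lerP p 0) => hp; last exact: vanish_pos.
pose m := absz p.
have e1 : - (m%:Z) = p by rewrite /m; lia.
have e2 : m%:Z = 0 - p by rewrite /m; lia.
have e1' : - (m.+1%:Z) = p - 1 by rewrite /m; lia.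
have e2' : m.+1%:Z = 0 - (p - 1) by rewrite /m; lia.
rewrite /dtot (diag_tot_at _ e1 e2) (diag_tot_at _ e1' e2') dv_cast dh_cast.
by rewrite !castB_comp (castBD_cast (U_e1 m) (U_e2 m)) hd castB0.
Qed.

End Casts.

Section ZigZag.
Variable K : fieldType.
Variable B : int -> int -> lmodType K.
Variable dh : forall p q : int, {linear B p q -> B (p + 1) q}.
Variable dv : forall p q : int, {linear B p q -> B p (q + 1)}.
Hypothesis dv2 : forall p q (x : B p q), dv p (q + 1) (dv p q x) = 0.
Hypothesis anti : forall p q (x : B p q),
  dh p (q + 1) (dv p q x) + dv (p + 1) q (dh p q x) = 0.
Hypothesis exact : forall (p q : int) (x : B (p + 1) q), p + 1 + q != 0 ->
  dh (p + 1) q x = 0 -> exists y : B p q, dh p q y = x.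
Variable pi : forall n : nat, {linear Bd B n -> Bd B n}.
Hypothesis pi_idem : forall n (x : Bd B n), pi n (pi n x) = pi n x.
Hypothesis pi_ker : forall n (x : Bd B n), pi n x = 0 <-> dh _ _ x = 0.

Lemma dh_pi m (x : Bd B m) : dh _ _ (pi m x) = dh _ _ x.
Proof.
have : pi m (x - pi m x) = 0 by rewrite linearB pi_idem subrr.
by move/pi_ker; rewrite linearB => /eqP; rewrite subr_eq0 => /eqP.
Qed.

Lemma dh_dv_eq0 p q (x : B p q) : dv _ _ (dh _ _ x) = 0 -> dh _ _ (dv _ _ x) = 0.
Proof. by move=> hx; have := anti x; rewrite hx addr0. Qed.

Lemma dh_U m (x : Bd B m) : dv _ _ (dh _ _ x) = 0 ->
  castB (U_e1 m) (U_e2 m) (dh _ _ (U dh dv pi x)) = dv _ _ x.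
Proof.
move=> hx.
have [u hu] : exists u : Bd B m.+1, castB (U_e1 m) (U_e2 m) (dh _ _ u) = dv _ _ x.
  pose v := castB (esym (U_e1 m)) (esym (U_e2 m)) (dv _ _ x).
  have hv : dh _ _ v = 0 by rewrite /v dh_cast dh_dv_eq0 // castB0.
  have [|y hy] := exact _ hv; first by apply/eqP; lia.
  by exists y; rewrite hy /v castB_comp castB_id.
have := epsilon_spec (inhabits (0 : Bd B m.+1))
  (fun u : Bd B m.+1 => castB (U_e1 m) (U_e2 m) (dh _ _ u) = dv _ _ x)
  (ex_intro _ u hu).
by rewrite /U dh_pi.
Qed.

Variable n : nat.
Variable z : Bd B n.
Hypothesis hz : dh _ _ z = 0.

Lemma dv_dh_Uiter k : dv _ _ (dh _ _ (Uiter dh dv pi k z)) = 0.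
Proof.
elim: k => [|k IH] /=; first by rewrite hz linear0.
have -> : dh _ _ (U dh dv pi (Uiter dh dv pi k z)) =
    castB (esym (U_e1 (k + n))) (esym (U_e2 (k + n))) (dv _ _ (Uiter dh dv pi k z)).
  by rewrite -(dh_U IH) castB_comp castB_id.
by rewrite dv_cast dv2 castB0.
Qed.

Lemma beta_lt m : (m < n)%N -> beta dh dv pi z m = 0.
Proof.
move=> lt_mn; have ge_mn : (n <= m)%N = false by apply/negbTE; rewrite -ltnNge.
by rewrite /beta (dep_if_false _ _ ge_mn).
Qed.

Lemma beta_addn k : beta dh dv pi z (k + n) = (-1) ^+ k *: Uiter dh dv pi k z.
Proof.
have le_n_kn : (n <= k + n)%N = true by rewrite leq_addl.
rewrite /beta (dep_if_true _ _ le_n_kn).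
by move: (subnK le_n_kn); rewrite addnK => e; rewrite castBd_id.
Qed.

Lemma beta_id : beta dh dv pi z n = z.
Proof. by have := beta_addn 0; rewrite expr0 scale1r. Qed.

Lemma beta_zigzag m : dv _ _ (beta dh dv pi z m)
  + castB (U_e1 m) (U_e2 m) (dh _ _ (beta dh dv pi z m.+1)) = 0.
Proof.
case: (ltnP m n) => [lt_mn | le_nm].
  rewrite beta_lt // linear0 add0r.
  case: (ltnP m.+1 n) => [lt_m1n | le_nm1]; first by rewrite beta_lt // linear0 castB0.
  have e : m.+1 = n by apply/eqP; rewrite eqn_leq lt_mn le_nm1.
  by move: (U_e1 m) (U_e2 m); rewrite e beta_id => ? ?; rewrite hz castB0.
have [k ->] : exists k, m = (k + n)%N by exists (m - n)%N; rewrite subnK.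
rewrite beta_addn (beta_addn k.+1) !linearZ castBZ /= (dh_U (dv_dh_Uiter k)).
by rewrite exprS mulN1r scaleNr addrN.
Qed.

End ZigZag.

Theorem lemma5p2 (K : fieldType) (B : int -> int -> lmodType K)
  (dh : forall p q : int, {linear B p q -> B (p + 1) q})
  (dv : forall p q : int, {linear B p q -> B p (q + 1)})
  (dh2 : forall p q (x : B p q), dh (p + 1) q (dh p q x) = 0)
  (dv2 : forall p q (x : B p q), dv p (q + 1) (dv p q x) = 0)
  (anti : forall p q (x : B p q), dh p (q + 1) (dv p q x) + dv (p + 1) q (dh p q x) = 0)
  (vanish : forall p q (x : B p q), ~~ ((0 <= - p) && (- p <= q)) -> x = 0)
  (bounded : exists N : int, forall p q (x : B p q), p < N -> x = 0)
  (exact : forall (p q : int) (x : B (p + 1) q), p + 1 + q != 0 ->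
     dh (p + 1) q x = 0 -> exists y : B p q, dh p q y = x)
  (pi : forall n : nat, {linear Bd B n -> Bd B n})
  (pi_idem : forall n (x : Bd B n), pi n (pi n x) = pi n x)
  (pi_ker : forall n (x : Bd B n), pi n x = 0 <-> dh _ _ x = 0)
  (n : nat) (z : Bd B n) (hz : dh _ _ z = 0) :
  let b := @beta K B dh dv pi n z in
  @is_cocycle K B dh dv 0 (@diag_tot K B b)
  /\ (exists N : nat, forall m : nat, (N <= m)%N -> b m = 0)
  /\ b n = z
  /\ (forall m : nat, (m < n)%N -> b m = 0).
Proof.
move=> b; split; [|split; [|split]].
- apply: diag_tot_cocycle => [p q x hp|m].
    by apply: vanish; apply/negP => /andP[]; lia.
  exact: beta_zigzag.
- have [N hN] := bounded.
  by exists (absz N).+1 => m hm; apply: hN; lia.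
- exact: beta_id.
- exact: beta_lt.
Qed.
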